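(* Let $\phi:M_D(\mathbb{C})\to M_D(\mathbb{C})$ be a primitive Schwarz map. Then $\phi$ has spectral radius $1$ if and only if $\phi$ is unital, i.e. $\phi(I)=I$.
   Context: $M_D(\mathbb{C})$ is the algebra of complex $D\times D$ matrices. A linear map $\phi$ on $M_D(\mathbb{C})$ is a Schwarz map if $\phi(a^*a)\ge\phi(a)^*\phi(a)$ for all $a$ (in the Loewner order); unitality is not part of this definition. $\phi$ is primitive if there is $n\in\mathbb{N}$ such that $\phi^n$ maps every nonzero positive semidefinite matrix to a positive definite matrix. The spectral radius is that of $\phi$ as a linear operator on the vector space $M_D(\mathbb{C})$. *)

From HB Require Import structures.
From mathcomp Require Import all_boot all_order all_algebra.
From mathcomp Require Import complex.
From mathcomp Require Import reals Rstruct.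
From Stdlib Require Import Rdefinitions.
Set Implicit Arguments.
Unset Strict Implicit.
Unset Printing Implicit Defensive.
Import Order.TTheory GRing.Theory Num.Theory.
Local Open Scope ring_scope.

Definition C : numClosedFieldType := Rdefinitions.R[i].

Definition adjmx {D : nat} (A : 'M[C]_D) : 'M[C]_D := (map_mx Num.conj A)^T.

Definition psd {D : nat} (A : 'M[C]_D) : Prop :=
  adjmx A = A /\ forall v : 'cV[C]_D, 0 <= ((map_mx Num.conj v)^T *m A *m v) 0 0.

Definition pd {D : nat} (A : 'M[C]_D) : Prop :=
  adjmx A = A /\ forall v : 'cV[C]_D, v != 0 -> 0 < ((map_mx Num.conj v)^T *m A *m v) 0 0.

Definition loewner_le {D : nat} (A B : 'M[C]_D) : Prop := psd (B - A).

Definition schwarz_map {D : nat} (phi : {linear 'M[C]_D -> 'M[C]_D}) : Prop :=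
  forall a : 'M[C]_D, loewner_le (adjmx (phi a) *m phi a) (phi (adjmx a *m a)).

Definition primitive {D : nat} (phi : {linear 'M[C]_D -> 'M[C]_D}) : Prop :=
  exists n : nat, forall A : 'M[C]_D, psd A -> A != 0 -> pd (iter n phi A).

Definition lin_eigenvalue {D : nat} (phi : {linear 'M[C]_D -> 'M[C]_D}) (l : C) : Prop :=
  exists X : 'M[C]_D, X != 0 /\ phi X = l *: X.

Definition is_spectral_radius {D : nat} (phi : {linear 'M[C]_D -> 'M[C]_D}) (r : C) : Prop :=
  (exists l, lin_eigenvalue phi l /\ `|l| = r) /\
  (forall l, lin_eigenvalue phi l -> `|l| <= r).

From HB Require Import structures.
From mathcomp Require Import all_boot all_order all_algebra.
From mathcomp Require Import sesquilinear spectral.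
Import Order.TTheory GRing.Theory Num.Theory.
Set Implicit Arguments.
Unset Strict Implicit.
Unset Printing Implicit Defensive.
Local Open Scope ring_scope.
Local Open Scope sesquilinear_scope.

(* A Schwarz map is positive, hence monotone for the Loewner order, and the
   Schwarz inequality at [1] gives [phi 1 <= 1], hence [phi^k 1 <= 1]. At an
   eigenvector [phi X = l X] it gives [|l|^2 X^*X <= phi (X^*X)]. Test these
   inequalities against a unit eigenvector v for the largest eigenvalue c of
   [Y = X^*X], so that [Y <= c] and [v^* Y v = c]. If [phi 1 = 1] then
   [|l|^2 c <= v^* phi(Y) v <= c]. If [|l| = 1] then [Y <= phi^k Y] for all k, so
   [c <= v^* phi^(k+1)(Y) v <= c v^* phi^(k+1)(1) v = c (v^* phi^k(1) v - t) <= c (1 - t)]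
   where [t = v^* phi^k(1 - phi 1) v] is positive by primitivity unless [phi 1 = 1]. *)

(* An index minimising the number of strictly larger values is a maximiser. *)
Lemma real_argmax (R : numDomainType) (I : finType) (f : I -> R) (i0 : I) :
  (forall i, f i \is Num.real) -> exists i, forall j, f j <= f i.
Proof.
move=> fR; case: (@arg_minnP _ i0 predT (fun i => #|[pred j | f i < f j]|)) => //.
move=> i _ imin; exists i => j; rewrite real_leNgt //; apply/negP => lt_ij.
have := imin j isT; apply/negP; rewrite -ltnNge; apply: proper_card.
apply/properP; split; first by apply/subsetP => k; rewrite !inE; apply: lt_trans.
by exists j; rewrite !inE ?ltxx.
Qed.

Section ConjTranspose.
Variables (K : numClosedFieldType) (m n p : nat).

Lemma trmxC_mul (A : 'M[K]_(m, n)) (B : 'M[K]_(n, p)) : (A *m B)^t* = B^t* *m A^t*.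
Proof. by rewrite trmx_mul map_mxM. Qed.

Lemma trmxCD (A B : 'M[K]_(m, n)) : (A + B)^t* = A^t* + B^t*.
Proof. by rewrite linearD map_mxD. Qed.

Lemma trmxCB (A B : 'M[K]_(m, n)) : (A - B)^t* = A^t* - B^t*.
Proof. by rewrite linearB map_mxB. Qed.

Lemma trmxCZ (c : K) (A : 'M[K]_(m, n)) : (c *: A)^t* = c^* *: A^t*.
Proof. by apply/matrixP => i j; rewrite !mxE rmorphM. Qed.

Lemma trmxC_scalar (c : K) : (c%:M : 'M[K]_n)^t* = c^*%:M.
Proof. by rewrite tr_scalar_mx map_scalar_mx. Qed.

End ConjTranspose.

Section Loewner.
Variables (K : numClosedFieldType) (n : nat).
Implicit Types (A B : 'M[K]_n) (v : 'cV[K]_n).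

Definition qform A v : K := (v^t* *m A *m v) 0 0.

Definition psdmx A := A^t* = A /\ forall v, 0 <= qform A v.
Definition pdmx A := A^t* = A /\ forall v, v != 0 -> 0 < qform A v.
Definition lemx A B := psdmx (B - A).

Lemma qform_congr A B v : qform (B^t* *m A *m B) v = qform A (B *m v).
Proof. by rewrite /qform trmxC_mul !mulmxA. Qed.

Lemma qformD A B v : qform (A + B) v = qform A v + qform B v.
Proof. by rewrite /qform mulmxDr mulmxDl !mxE. Qed.

Lemma qformB A B v : qform (A - B) v = qform A v - qform B v.
Proof. by rewrite /qform mulmxBr mulmxBl !mxE. Qed.

Lemma qformZ (c : K) A v : qform (c *: A) v = c * qform A v.
Proof. by rewrite /qform -scalemxAr -scalemxAl mxE. Qed.

Lemma qform0 A : qform A 0 = 0.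
Proof. by rewrite /qform mulmx0 mxE. Qed.

Lemma qform_diag (d : 'rV[K]_n) v :
  qform (diag_mx d) v = \sum_j d 0 j * `|v j 0| ^+ 2.
Proof.
rewrite /qform mul_mx_diag mxE; apply: eq_bigr => j _.
by rewrite !mxE normCKC mulrCA mulrA.
Qed.

Lemma qform_diag_delta (d : 'rV[K]_n) i : qform (diag_mx d) (delta_mx i 0) = d 0 i.
Proof.
rewrite qform_diag (bigD1 i) //= big1 => [|j ji]; last first.
  by rewrite mxE (negPf ji) mulr0n normr0 expr0n mulr0.
by rewrite mxE !eqxx mulr1n normr1 expr1n mulr1 addr0.
Qed.

Lemma qform1 v : qform 1%:M v = \sum_j `|v j 0| ^+ 2.
Proof.
by rewrite -diag_const_mx qform_diag; apply: eq_bigr => j _; rewrite mxE mul1r.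
Qed.

Lemma psdmxD A B : psdmx A -> psdmx B -> psdmx (A + B).
Proof.
move=> [hA qA] [hB qB]; split; first by rewrite trmxCD hA hB.
by move=> v; rewrite qformD addr_ge0.
Qed.

Lemma psdmx_congr A B : psdmx A -> psdmx (B^t* *m A *m B).
Proof.
move=> [hA qA]; split; last by move=> v; rewrite qform_congr.
by rewrite !trmxC_mul trmxCK hA mulmxA.
Qed.

Lemma psdmx1 : psdmx 1%:M.
Proof.
split; first by rewrite trmxC_scalar conjC1.
by move=> v; rewrite qform1 sumr_ge0 // => j _; rewrite exprn_ge0.
Qed.

Lemma psdmx_trmxC_mul (X : 'M[K]_n) : psdmx (X^t* *m X).
Proof. by rewrite -[X^t*]mulmx1; apply: psdmx_congr psdmx1. Qed.

Lemma psdmx_diag (d : 'rV[K]_n) : (forall i, 0 <= d 0 i) -> psdmx (diag_mx d).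
Proof.
move=> d_ge0; split.
  apply/matrixP => i j; rewrite !mxE eq_sym.
  by case: eqP => [->|_]; rewrite ?mulr1n ?mulr0n ?conjC0 // geC0_conj.
by move=> v; rewrite qform_diag sumr_ge0 // => j _; rewrite mulr_ge0 ?exprn_ge0.
Qed.

Lemma lemx_refl A : lemx A A.
Proof.
rewrite /lemx subrr; split; first by apply/matrixP => i j; rewrite !mxE conjC0.
by move=> v; rewrite /qform mulmx0 mul0mx mxE.
Qed.

Lemma lemx_trans B A E : lemx A B -> lemx B E -> lemx A E.
Proof. by rewrite /lemx => AB BE; have := psdmxD BE AB; rewrite addrA subrK. Qed.

Lemma lemx_qform A B v : lemx A B -> qform A v <= qform B v.
Proof. by move=> [_ /(_ v)]; rewrite qformB subr_ge0. Qed.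

End Loewner.

Section Spectral.
Variables (K : numClosedFieldType) (n : nat).
Implicit Types (A X Y : 'M[K]_n).

Lemma trmxC_mul_eq0 X : (X^t* *m X == 0) = (X == 0).
Proof.
apply/eqP/eqP => [XX0|->]; last by rewrite mulmx0.
apply/matrixP => i j; have := qform_congr 1%:M X (delta_mx j 0).
rewrite mulmx1 XX0 /qform mulmx0 mul0mx mxE -/(qform _ _) qform1 -colE.
move=> /esym/psumr_eq0P/(_ i isT)/eqP; rewrite expf_eq0 normr_eq0 !mxE.
by move=> /(_ (fun k _ => exprn_ge0 2 (normr_ge0 _)))/andP[_ /eqP].
Qed.

Lemma hermitian_spectral A : A^t* = A -> exists P (d : 'rV[K]_n),
  [/\ P *m P^t* = 1%:M, P^t* *m P = 1%:M & A = P^t* *m diag_mx d *m P].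
Proof.
move=> hermA; have /orthomx_spectralP defA : A \is normalmx.
  by apply/normalmxP; rewrite hermA.
have /unitarymxP PP := spectral_unitarymx A.
exists (spectralmx A), (spectral_diag A); split => //; first exact: mulmx1C.
by rewrite {1}defA invmx_unitary ?spectral_unitarymx.
Qed.

Lemma psdmx_spectral A : psdmx A -> exists P (d : 'rV[K]_n),
  [/\ P *m P^t* = 1%:M, P^t* *m P = 1%:M, A = P^t* *m diag_mx d *m P
    & forall i, 0 <= d 0 i].
Proof.
move=> [hermA qA]; have [P [d [PP PP' defA]]] := hermitian_spectral hermA.
exists P, d; split => // i; rewrite -qform_diag_delta.
have -> : diag_mx d = P^t*^t* *m A *m P^t*.
  by rewrite trmxCK defA !mulmxA PP mul1mx -mulmxA PP mulmx1.
by rewrite qform_congr.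
Qed.

Lemma psdmx_sqrt A : psdmx A -> exists B : 'M[K]_n, A = B^t* *m B.
Proof.
move=> /psdmx_spectral [P [d [_ _ defA d_ge0]]].
pose s : 'rV[K]_n := \row_j sqrtC (d 0 j).
exists (diag_mx s *m P); rewrite trmxC_mul tr_diag_mx map_diag_mx.
have -> : map_mx Num.conj s = s.
  by apply/matrixP => i j; rewrite !mxE geC0_conj // sqrtC_ge0.
rewrite mulmxA -(mulmxA (P^t*)) mulmx_diag defA; congr (_ *m diag_mx _ *m _).
by apply/matrixP => i j; rewrite !mxE -expr2 sqrtCK !ord1.
Qed.

Lemma psdmx_max_eigen Y : psdmx Y -> Y != 0 -> exists c v,
  [/\ 0 < c, lemx Y c%:M, qform Y v = c & qform 1%:M v = 1].
Proof.
move=> psdY Yn0; have [P [d [PP PP' defY d_ge0]]] := psdmx_spectral psdY.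
have [i0 _] : exists i0 : 'I_n, true.
  case: n Y Yn0 {psdY P d PP PP' defY d_ge0} => [|n'] Y; last by exists ord0.
  by rewrite thinmx0 eqxx.
have [i imax] := @real_argmax _ _ (fun i => d 0 i) i0 (fun i => ger0_real (d_ge0 i)).
have diagY : P *m Y *m P^t* = diag_mx d.
  by rewrite defY !mulmxA PP mul1mx -mulmxA PP mulmx1.
exists (d 0 i), (P^t* *m delta_mx i 0); split.
- rewrite lt_def d_ge0 andbT; apply: contraNneq Yn0 => di0.
  rewrite defY; suff -> : d = 0 by rewrite raddf0 mulmx0 mul0mx.
  by apply/matrixP => k j; rewrite ord1 mxE; apply/le_anti; rewrite d_ge0 -di0 imax.
- rewrite /lemx.
  have -> : (d 0 i)%:M - Y = P^t* *m diag_mx (const_mx (d 0 i) - d) *m P.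
    rewrite raddfB /= diag_const_mx mulmxBr mulmxBl -defY mul_mx_scalar -scalemxAl.
    by rewrite PP' scalemx1.
  by apply/psdmx_congr/psdmx_diag => j; rewrite !mxE subr_ge0 imax.
- by rewrite -qform_congr trmxCK diagY qform_diag_delta.
- by rewrite -qform_congr trmxCK mulmx1 PP -diag_const_mx qform_diag_delta mxE.
Qed.

End Spectral.

Definition schwarz (K : numClosedFieldType) n (phi : {linear 'M[K]_n -> 'M[K]_n}) :=
  forall a, lemx ((phi a)^t* *m phi a) (phi (a^t* *m a)).

Definition primitive_map (K : numClosedFieldType) n (phi : {linear 'M[K]_n -> 'M[K]_n}) :=
  exists k, forall A, psdmx A -> A != 0 -> pdmx (iter k phi A).

Section Schwarz.
Variables (K : numClosedFieldType) (n : nat) (phi : {linear 'M[K]_n -> 'M[K]_n}).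
Hypothesis phi_schwarz : schwarz phi.
Implicit Types (A B X Y : 'M[K]_n).

Lemma iter_linearB k A B : iter k phi (A - B) = iter k phi A - iter k phi B.
Proof. by elim: k => //= k ->; rewrite linearB. Qed.

Lemma iter_linearZ k (c : K) A : iter k phi (c *: A) = c *: iter k phi A.
Proof. by elim: k => //= k ->; rewrite linearZ. Qed.

Lemma schwarz_psdmx A : psdmx A -> psdmx (phi A).
Proof.
move=> /psdmx_sqrt [B ->].
by have := psdmxD (phi_schwarz B) (psdmx_trmxC_mul (phi B)); rewrite subrK.
Qed.

Lemma schwarz_iter_lemx k A B : lemx A B -> lemx (iter k phi A) (iter k phi B).
Proof.
rewrite /lemx -iter_linearB; elim: k => //= k IHk /IHk; exact: schwarz_psdmx.
Qed.

(* [phi 1] is self-adjoint with [phi 1 ^+ 2 <= phi 1], and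
   [1 - phi 1 = (1 - phi 1) ^+ 2 + (phi 1 - phi 1 ^+ 2)]. *)
Lemma schwarz_lemx1 : lemx (phi 1%:M) 1%:M.
Proof.
have := phi_schwarz 1%:M; rewrite trmxC_scalar conjC1 mul1mx.
set P := phi 1%:M => PP_le_P.
have selfP : P^t* = P.
  by case: PP_le_P; rewrite trmxCB trmxC_mul trmxCK => /addIr.
rewrite /lemx.
have -> : 1%:M - P = (1%:M - P)^t* *m (1%:M - P) + (P - P^t* *m P).
  rewrite trmxCB trmxC_scalar conjC1 selfP mulmxBl !mulmxBr !mul1mx mulmx1.
  by rewrite subrK.
exact: psdmxD (psdmx_trmxC_mul _) PP_le_P.
Qed.

Lemma schwarz_iter_lemx1 k : lemx (iter k phi 1%:M) 1%:M.
Proof.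
elim: k => [|k IHk]; first exact: lemx_refl.
by rewrite iterSr; apply: lemx_trans IHk; apply: schwarz_iter_lemx schwarz_lemx1.
Qed.

Lemma schwarz_eigen X l : phi X = l *: X ->
  lemx (`|l| ^+ 2 *: (X^t* *m X)) (phi (X^t* *m X)).
Proof.
move=> eigX; have := phi_schwarz X.
by rewrite eigX trmxCZ -scalemxAl -scalemxAr scalerA normCKC.
Qed.

Lemma schwarz_unital_eigen_le1 X l :
  phi 1%:M = 1%:M -> X != 0 -> phi X = l *: X -> `|l| <= 1.
Proof.
move=> unital Xn0 eigX; rewrite -trmxC_mul_eq0 in Xn0.
have [c [v [c_gt0 XX_le_c XXv qf1v]]] := psdmx_max_eigen (psdmx_trmxC_mul X) Xn0.
have lower := lemx_qform v (schwarz_eigen eigX).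
have upper := lemx_qform v (schwarz_iter_lemx 1 XX_le_c).
rewrite qformZ XXv in lower.
rewrite /= -scalemx1 linearZ unital qformZ qf1v mulr1 in upper.
have : `|l| ^+ 2 * c <= 1 * c by rewrite mul1r; apply: le_trans lower upper.
by rewrite ler_pM2r // expr_le1.
Qed.

Lemma primitive_schwarz_subinvariant_unital Y : primitive_map phi ->
  psdmx Y -> Y != 0 -> lemx Y (phi Y) -> phi 1%:M = 1%:M.
Proof.
move=> [k pd_iter] psdY Yn0 Y_le_phiY.
have Y_le_iter j : lemx Y (iter j phi Y).
  elim: j => [|j IHj]; first exact: lemx_refl.
  by rewrite iterSr; apply: lemx_trans IHj _; apply: schwarz_iter_lemx.
have [c [v [c_gt0 Y_le_c Yv qf1v]]] := psdmx_max_eigen psdY Yn0.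
have vn0 : v != 0.
  by apply/eqP => v0; move: qf1v; rewrite v0 qform0 => /eqP; rewrite eq_sym oner_eq0.
apply/eqP; rewrite eq_sym -subr_eq0; apply/negPn/negP => defect_neq0.
have [_ /(_ v vn0)] := pd_iter _ schwarz_lemx1 defect_neq0.
set t := qform _ v => t_gt0.
have iterS1 : iter k.+1 phi 1%:M = iter k phi 1%:M - iter k phi (1%:M - phi 1%:M).
  by rewrite -iter_linearB iterSr opprB addrC subrK.
have : c <= c * (1 - t).
  rewrite -{1}Yv; apply: le_trans (lemx_qform v (Y_le_iter k.+1)) _.
  apply: le_trans (lemx_qform v (schwarz_iter_lemx k.+1 Y_le_c)) _.
  rewrite -scalemx1 iter_linearZ qformZ iterS1 qformB -/t ler_pM2l // lerD2r.
  rewrite -[X in _ <= X]qf1v.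
  exact: lemx_qform v (schwarz_iter_lemx1 k).
rewrite mulrBr mulr1 -subr_ge0 addrAC subrr add0r oppr_ge0.
by rewrite (lt_geF (mulr_gt0 c_gt0 t_gt0)).
Qed.

End Schwarz.

Section Dictionary.
Variable D : nat.
Implicit Types (A : 'M[C]_D) (phi : {linear 'M[C]_D -> 'M[C]_D}).

Lemma adjmxE A : adjmx A = A^t*.
Proof. exact: map_trmx. Qed.

Lemma psdE A : psd A <-> psdmx A.
Proof.
rewrite /psd /psdmx /qform adjmxE.
by split=> -[-> qA]; split=> // v; move: (qA v); rewrite map_trmx.
Qed.

Lemma pdE A : pd A <-> pdmx A.
Proof.
rewrite /pd /pdmx /qform adjmxE.
by split=> -[-> qA]; split=> // v /qA; rewrite map_trmx.
Qed.

Lemma schwarz_map_schwarz phi : schwarz_map phi -> schwarz phi.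
Proof. by move=> schwarz_phi a; have /psdE := schwarz_phi a; rewrite !adjmxE. Qed.

Lemma primitive_primitive_map phi : primitive phi -> primitive_map phi.
Proof.
move=> [k pd_iter]; exists k => A /psdE psdA An0; exact/pdE/pd_iter.
Qed.

End Dictionary.

Theorem proposition2p3 (D : nat) (phi : {linear 'M[C]_D -> 'M[C]_D}) :
  (0 < D)%N -> schwarz_map phi -> primitive phi ->
  (is_spectral_radius phi 1 <-> phi 1%:M = 1%:M).
Proof.
move=> D_gt0 /schwarz_map_schwarz schwarz_phi.
move=> /primitive_primitive_map primitive_phi.
split => [[[l [[X [Xn0 eigX]] norm_l]] _] | unital].
  apply: (primitive_schwarz_subinvariant_unital schwarz_phi primitive_phi
           (psdmx_trmxC_mul X)); first by rewrite trmxC_mul_eq0.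
  by have := schwarz_eigen schwarz_phi eigX; rewrite norm_l expr1n scale1r.
split => [|l [X [Xn0 eigX]]]; last exact: schwarz_unital_eigen_le1 eigX.
exists 1; split; last exact: normr1.
exists 1%:M; split; last by rewrite scale1r.
apply/eqP => /matrixP/(_ (Ordinal D_gt0) (Ordinal D_gt0))/eqP.
by rewrite !mxE eqxx oner_eq0.
Qed.
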